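(* Let $M\ge 1$ be an integer and consider a memoryless channel with binary input alphabet $\{0,1\}$, output alphabet $\mathcal{Y}=\{-M,\dots,0,\dots,M\}$ and transition probabilities $\varepsilon_{y|x}=P_{Y|X}(y|x)$, which is symmetric in the sense that $\varepsilon_{y|1}=\varepsilon_{-y|0}$ for all $y\in\mathcal{Y}$. Let $\mathcal{C}\subseteq\{0,1\}^n$ be a binary linear code of length $n$ with minimum Hamming distance $d_{\min}$ and weight distribution $S_w$ ($S_w$ = number of codewords of Hamming weight $w$), used over this channel with maximum-likelihood decoding. Then the decoding error probability $P_e$ satisfies $$P_e\le \sum_{\substack{\boldsymbol{\ell}=(\ell_{-M},\dots,\ell_M)\in\mathbb{Z}_+^{2M+1}\\ \sum_j\ell_j=n}}\Big(\prod_{j=-M}^M \varepsilon_{j|0}^{\ell_j}\Big)\min\Bigg\{\sum_{w=d_{\min}}^n S_w\sum_{\substack{\boldsymbol{\mu}\in\mathcal{U}_w(\boldsymbol{\ell})\\ \sum_j\mu_j\mathrm{LLR}_j\le 0}}\binom{w}{\mu_{-M},\dots,\mu_M}\binom{n-w}{\ell_{-M}-\mu_{-M},\dots,\ell_M-\mu_M},\ \binom{n}{\ell_{-M},\dots,\ell_M}\Bigg\}.$$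
   Context: $\mathbb{Z}_+$ denotes the nonnegative integers, and $\binom{m}{a_1,\dots,a_k}=\frac{m!}{a_1!\cdots a_k!}$ is the multinomial coefficient (for $a_i\in\mathbb{Z}_+$ with $\sum a_i=m$). For $\boldsymbol{\ell}\in\mathbb{Z}_+^{2M+1}$ with $\sum_j\ell_j=n$ and $0\le w\le n$, $\mathcal{U}_w(\boldsymbol{\ell})=\{\boldsymbol{\mu}=(\mu_{-M},\dots,\mu_M)\in\mathbb{Z}_+^{2M+1}:\ \sum_j\mu_j=w,\ 0\le\mu_j\le\ell_j \text{ for all } j\}$. $\mathrm{LLR}_j=\log(\varepsilon_{j|0}/\varepsilon_{j|1})$; the condition $\sum_j\mu_j\mathrm{LLR}_j\le 0$ means $\prod_j(\varepsilon_{j|0}/\varepsilon_{j|1})^{\mu_j}\le 1$, i.e. a length-$w$ output vector with $\mu_j$ occurrences of symbol $j$ is at least as likely under the all-ones input as under the all-zeros input. By linearity and symmetry the error probability does not depend on the transmitted codeword, and the bound is on the probability that the decoder does not output the transmitted codeword (ties in the likelihood are counted as errors). *)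

From HB Require Import structures.
From mathcomp Require Import all_boot all_order all_algebra.
Set Implicit Arguments. Unset Strict Implicit. Unset Printing Implicit Defensive.
Import Order.TTheory GRing.Theory Num.Theory.
Local Open Scope ring_scope.

(* Output alphabet {-M,...,M} is represented by 'I_(2M+1): the ordinal j
   stands for the symbol j - M, so that the negation y |-> -y is rev_ord. *)
Notation Yout M := ('I_(2 * M + 1)).

Definition multinom (R : fieldType) (K : finType) (m : nat) (a : K -> nat) : R :=
  (m`!)%:R / (\prod_(k : K) ((a k)`!)%:R).

Definition hwt n (c : 'rV['F_2]_n) : nat := #|[set i : 'I_n | c 0 i != 0]|.
Definition hdist n (c c' : 'rV['F_2]_n) : nat := #|[set i : 'I_n | c 0 i != c' 0 i]|.

Definition wdist n (C : {vspace 'rV['F_2]_n}) (w : nat) : nat :=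
  #|[set c : 'rV['F_2]_n | (c \in C) && (hwt c == w)]|.

Definition is_dmin n (C : {vspace 'rV['F_2]_n}) (d : nat) : Prop :=
  (exists c1, exists c2, [/\ c1 \in C, c2 \in C, c1 != c2 & hdist c1 c2 = d]) /\
  (forall c1 c2, c1 \in C -> c2 \in C -> c1 != c2 -> (d <= hdist c1 c2)%N).

Definition lik (R : realFieldType) M n (eps : 'F_2 -> Yout M -> R)
    (c : 'rV['F_2]_n) (y : {ffun 'I_n -> Yout M}) : R :=
  \prod_(i < n) eps (c 0 i) (y i).

(* ML decoding error probability when c is transmitted: the decoder fails
   iff some other codeword is at least as likely (ties count as errors). *)
Definition Perr (R : realFieldType) M n (eps : 'F_2 -> Yout M -> R)
    (C : {vspace 'rV['F_2]_n}) (c : 'rV['F_2]_n) : R :=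
  \sum_(y : {ffun 'I_n -> Yout M})
     lik eps c y *
     (if [exists c' : 'rV['F_2]_n, [&& c' \in C, c' != c & lik eps c y <= lik eps c' y]]
      then 1 else 0).

(* Vectors l, mu in Z_+^(2M+1) with entries
   bounded by n are represented as finite functions into 'I_n.+1 (no loss,
   since their entries sum to n resp. w <= n).
   The LLR condition sum_j mu_j LLR_j <= 0 is written in its product form
   prod_j eps_{j|0}^mu_j <= prod_j eps_{j|1}^mu_j. *)
Definition bound (R : realFieldType) M n (eps : 'F_2 -> Yout M -> R)
    (C : {vspace 'rV['F_2]_n}) (dmin : nat) : R :=
  \sum_(l : {ffun Yout M -> 'I_n.+1} | (\sum_j (l j : nat) == n)%N)
    (\prod_j eps 0 j ^+ l j) *
    Num.min
      (\sum_(dmin <= w < n.+1)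
         (wdist C w)%:R *
         \sum_(mu : {ffun Yout M -> 'I_n.+1} |
                 [&& (\sum_j (mu j : nat) == w)%N,
                     [forall j, (mu j <= l j)%N] &
                     \prod_j eps 0 j ^+ mu j <= \prod_j eps 1 j ^+ mu j])
           multinom R w (fun j => mu j : nat) *
           multinom R (n - w) (fun j => (l j - mu j)%N))
      (multinom R n (fun j => l j : nat)).

From HB Require Import structures.
From mathcomp Require Import all_boot all_order all_algebra.
From mathcomp Require Import ring.
Set Implicit Arguments. Unset Strict Implicit. Unset Printing Implicit Defensive.
Import Order.TTheory GRing.Theory Num.Theory.
Local Open Scope ring_scope.

(* By the symmetry of the channel, flipping the output symbols at the positions
   where the transmitted codeword c is 1 turns the error event for c into the
   error event for the all-zero codeword.  Sort the outputs y by their type l,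
   the vector of symbol counts: on the class of type l the likelihood of 0 is
   prod_j eps(j|0)^l_j, so it suffices to count the outputs of type l at which
   ML decoding fails.  There are at most multinom(n; l) of them, the size of the
   class, and by the union bound at most the number of pairs (d, y) with d a
   nonzero codeword at least as likely as 0 given y.  Whether d is at least as
   likely depends only on the type mu of y restricted to the support of d, and
   for d of weight w >= dmin exactly multinom(w; mu) multinom(n - w; l - mu)
   outputs of type l have restricted type mu. *)

Definition cnt n (P : 'I_n -> bool) : nat := (\sum_(i < n) (P i : nat))%N.

Section Cnt.

Variable n : nat.
Implicit Types P m : 'I_n -> bool.

Lemma cnt_card P : cnt P = #|[set i | P i]|.
Proof.
rewrite -sum1dep_card /cnt [RHS]big_mkcond /=.
by apply: eq_bigr => i _; case: (P i).
Qed.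

Lemma cnt_le P : (cnt P <= n)%N.
Proof. by rewrite cnt_card -[X in (_ <= X)%N]card_ord max_card. Qed.

Lemma cnt_predT : cnt (fun _ : 'I_n => true) = n.
Proof. by rewrite cnt_card cardsT card_ord. Qed.

Lemma cnt_splitID m P :
  cnt P = (cnt (fun i => m i && P i) + cnt (fun i => ~~ m i && P i))%N.
Proof.
by rewrite /cnt -big_split; apply: eq_bigr => i _; case: (m i) => /=; rewrite ?addn0.
Qed.

Lemma cnt_predC m : cnt (fun i => ~~ m i) = (n - cnt m)%N.
Proof.
have cnt_total : (cnt m + cnt (fun i => ~~ m i))%N = n.
  rewrite -[RHS]cnt_predT /cnt -big_split /=.
  by apply: eq_bigr => i _; case: (m i).
by rewrite -[X in (X - _)%N]cnt_total addKn.
Qed.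

Lemma cnt_andb_le m P : (cnt (fun i => m i && P i) <= cnt P)%N.
Proof. by apply: leq_sum => i _; case: (m i). Qed.

Lemma sum_cnt_fibers (K : finType) (y : 'I_n -> K) m :
  (\sum_(j : K) cnt (fun i => m i && (y i == j)))%N = cnt m.
Proof.
rewrite /cnt exchange_big /=; apply: eq_bigr => i _.
rewrite (bigD1 (y i)) //= eqxx andbT big1 ?addn0 // => j /negbTE.
by rewrite eq_sym => ->; rewrite andbF.
Qed.

Lemma prod_fibers (R : comPzSemiRingType) (K : finType) (y : 'I_n -> K) m (f : K -> R) :
  \prod_(i | m i) f (y i) = \prod_(j : K) f j ^+ cnt (fun i => m i && (y i == j)).
Proof.
rewrite (partition_big y predT) //=; apply: eq_bigr => j _.
rewrite (eq_bigr (fun=> f j)); last by move=> i /andP[_ /eqP ->].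
by rewrite prodr_const cnt_card cardsE.
Qed.

End Cnt.

Lemma cntS n (P : 'I_n.+1 -> bool) : cnt P = (P ord0 + cnt (fun i => P (lift ord0 i)))%N.
Proof. by rewrite /cnt big_ord_recl. Qed.

Definition fcons n (K : finType) (k : K) (z : {ffun 'I_n -> K}) : {ffun 'I_n.+1 -> K} :=
  [ffun i => if unlift ord0 i is Some i' then z i' else k].

Lemma fcons0 n (K : finType) (k : K) (z : {ffun 'I_n -> K}) : fcons k z ord0 = k.
Proof. by rewrite ffunE unlift_none. Qed.

Lemma fconsS n (K : finType) (k : K) (z : {ffun 'I_n -> K}) i : fcons k z (lift ord0 i) = z i.
Proof. by rewrite ffunE liftK. Qed.

Lemma cnt_fcons n (K : finType) (Q : 'I_n.+1 -> K -> bool) k (z : {ffun 'I_n -> K}) :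
  cnt (fun i => Q i (fcons k z i)) = (Q ord0 k + cnt (fun i => Q (lift ord0 i) (z i)))%N.
Proof. by rewrite cntS fcons0; congr addn; apply: eq_bigr => i _; rewrite fconsS. Qed.

Lemma sum_ffunS (R : nmodType) n (K : finType) (F : {ffun 'I_n.+1 -> K} -> R) :
  \sum_y F y = \sum_(k : K) \sum_(z : {ffun 'I_n -> K}) F (fcons k z).
Proof.
rewrite pair_big /= (reindex (fun p : K * {ffun 'I_n -> K} => fcons p.1 p.2)) //=.
apply: onW_bij.
exists (fun y : {ffun 'I_n.+1 -> K} => (y ord0, [ffun i => y (lift ord0 i)])).
  move=> [k z] /=; rewrite fcons0; congr pair; apply/ffunP => i.
  by rewrite ffunE fconsS.
move=> y; apply/ffunP => i; rewrite ffunE /=.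
by case: unliftP => [j ->|->]; rewrite ?ffunE.
Qed.

Lemma forall_addn_eq (T : finType) (t : T) (x a : T -> nat) :
  [forall u, ((t == u) + x u == a u)%N] = (0 < a t)%N && [forall u, x u == a u - (u == t)]%N.
Proof.
apply/forallP/andP => [H|[a_pos /forallP H] u].
  split; first by move: (H t); rewrite eqxx => /eqP <-.
  by apply/forallP => u; rewrite -(eqP (H u)) [u == t]eq_sym addKn.
rewrite (eqP (H u)) [u == t]eq_sym; case: (t =P u) => [<-|_]; last by rewrite subn0.
by rewrite add1n subn1 prednK.
Qed.

Section Multinomial.

Variable R : numFieldType.

Lemma fact_neq0 k : (k`!)%:R != 0 :> R.
Proof. by rewrite pnatr_eq0 -lt0n fact_gt0. Qed.

Lemma eq_multinom (K : finType) m (a b : K -> nat) :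
  a =1 b -> multinom R m a = multinom R m b.
Proof. by move=> eq_ab; rewrite /multinom; under eq_bigr do rewrite eq_ab. Qed.

Lemma multinom0 (K : finType) (a : K -> nat) : a =1 (fun=> 0%N) -> multinom R 0 a = 1.
Proof. by move=> a0; rewrite (eq_multinom _ a0) /multinom big1 ?divr1. Qed.

Lemma multinom_ge0 (K : finType) m (a : K -> nat) : 0 <= multinom R m a.
Proof. by rewrite /multinom divr_ge0 // prodr_ge0. Qed.

Lemma multinom_decr (K : finType) m (a : K -> nat) k :
  (if (0 < a k)%N then multinom R m (fun j => a j - (j == k))%N else 0)
  = (m`!)%:R * (a k)%:R / \prod_j ((a j)`!)%:R.
Proof.
rewrite /multinom (bigD1 k) //= [in RHS](bigD1 k) //= eqxx subn1.
under eq_bigr => j /negbTE -> do rewrite subn0.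
have Q_neq0 : \prod_(j | j != k) ((a j)`!)%:R != 0 :> R.
  by apply/prodf_neq0 => j _; exact: fact_neq0.
case: (a k) => [|t] /=; first by rewrite mulr0 mul0r.
rewrite factS natrM.
have t1_neq0 : 1 + t%:R != 0 :> R by rewrite addrC natr1 pnatr_eq0.
by field; rewrite Q_neq0 fact_neq0 t1_neq0.
Qed.

Lemma multinomS (K : finType) m (a : K -> nat) :
  (\sum_k a k)%N = m.+1 ->
  multinom R m.+1 a = \sum_(k | (0 < a k)%N) multinom R m (fun j => a j - (j == k))%N.
Proof.
move=> sum_a; rewrite big_mkcond /=.
under eq_bigr do rewrite multinom_decr.
rewrite -big_distrl -big_distrr /= -natr_sum sum_a /multinom factS natrM.
by rewrite [_ * m`!%:R]mulrC.
Qed.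

End Multinomial.

Definition has_counts (G K : finType) n (g : 'I_n -> G) (a : G * K -> nat)
    (y : {ffun 'I_n -> K}) : bool :=
  [forall p, cnt (fun i => (g i, y i) == p) == a p].

Lemma has_counts_fcons (G K : finType) n (g : 'I_n.+1 -> G) (a : G * K -> nat) k z :
  has_counts g a (fcons k z)
  = (0 < a (g ord0, k))%N
    && has_counts (fun i => g (lift ord0 i)) (fun p => a p - (p == (g ord0, k)))%N z.
Proof.
rewrite /has_counts -forall_addn_eq; apply: eq_forallb => p.
by rewrite (cnt_fcons (fun i x => (g i, x) == p)).
Qed.

Lemma card_has_counts (R : numFieldType) (G K : finType) n (g : 'I_n -> G)
    (a : G * K -> nat) :
  (forall c, (\sum_j a (c, j))%N = cnt (fun i => g i == c)) ->
  \sum_(y | has_counts g a y) 1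
  = \prod_c multinom R (cnt (fun i => g i == c)) (fun j => a (c, j)) :> R.
Proof.
elim: n g a => [|n IH] g a sum_a.
  have a0 c j : a (c, j) = 0%N.
    by move/eqP: (sum_a c); rewrite /cnt big_ord0 sum_nat_eq0 => /forallP/(_ j)/eqP.
  rewrite [RHS]big1 => [|c _]; last first.
    by rewrite /cnt big_ord0; apply: multinom0 => j; exact: a0.
  rewrite (eq_bigl predT) => [|y]; last first.
    by apply/forallP => -[c j]; rewrite /cnt big_ord0 a0.
  by rewrite sumr_const card_ffun card_ord expn0.
have cnt_g c : cnt (fun i => g i == c)
    = ((g ord0 == c) + cnt (fun i => g (lift ord0 i) == c))%N by exact: cntS.
rewrite big_mkcond sum_ffunS (bigD1 (g ord0)) //= cnt_g eqxx add1n.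
rewrite multinomS ?sum_a ?cnt_g ?eqxx // big_distrl /= [RHS]big_mkcond /=.
apply: eq_bigr => k _; rewrite -big_mkcond /=.
under eq_bigl do rewrite has_counts_fcons.
have [_|a_pos] := posnP (a (g ord0, k)); first by rewrite big_pred0.
rewrite IH => [|c]; last first.
  rewrite sumnB => [|j _]; last first.
    by rewrite xpair_eqE; case: (c =P g ord0) (j =P k) => [-> | _] [-> | _].
  rewrite sum_a cnt_g; case: (g ord0 =P c) => [<- | /eqP g0_neq_c] /=.
    rewrite (bigD1 k) //= big1 => [|j /negbTE j_neq_k]; last first.
      by rewrite xpair_eqE j_neq_k andbF.
    by rewrite xpair_eqE !eqxx /= addn0 addKn.
  by rewrite big1 ?subn0 // => j _; rewrite xpair_eqE eq_sym (negbTE g0_neq_c).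
rewrite (bigD1 (g ord0)) //=; congr (_ * _).
  by apply: eq_multinom => j; rewrite xpair_eqE eqxx.
apply: eq_bigr => c c_neq_g0; rewrite cnt_g [g ord0 == c]eq_sym (negbTE c_neq_g0) add0n.
by apply: eq_multinom => j; rewrite xpair_eqE (negbTE c_neq_g0) subn0.
Qed.

Section Types.

Variables (K : finType) (n : nat).
Implicit Types (m : 'I_n -> bool) (y : {ffun 'I_n -> K}) (l mu : {ffun K -> 'I_n.+1}).

Definition type_on m y : {ffun K -> 'I_n.+1} :=
  [ffun j => inord (cnt (fun i => m i && (y i == j)))].

Definition type_of y := type_on xpredT y.

Lemma type_onE m y j : type_on m y j = cnt (fun i => m i && (y i == j)) :> nat.
Proof. by rewrite ffunE inordK // ltnS cnt_le. Qed.

Lemma sum_type_on m y : (\sum_j type_on m y j)%N = cnt m.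
Proof. by under eq_bigr do rewrite type_onE; exact: sum_cnt_fibers. Qed.

Lemma sum_type_of y : (\sum_j type_of y j)%N = n.
Proof. by rewrite sum_type_on cnt_predT. Qed.

Lemma prod_type_on (R : comPzSemiRingType) (f : K -> R) m y :
  \prod_(i | m i) f (y i) = \prod_j f j ^+ type_on m y j.
Proof. by rewrite prod_fibers; under [RHS]eq_bigr do rewrite type_onE. Qed.

Lemma has_counts_type m l mu y :
  (forall j, mu j <= l j)%N ->
  has_counts m (fun p => if p.1 then mu p.2 : nat else l p.2 - mu p.2)%N y
  = (type_of y == l) && (type_on m y == mu).
Proof.
move=> mu_le_l.
have cnt_class c j : cnt (fun i => (m i, y i) == (c, j))
    = cnt (fun i => (if c then m i else ~~ m i) && (y i == j)).
  by apply: eq_bigr => i _; rewrite xpair_eqE; case: c; rewrite ?eqb_id ?eqbF_neg.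
apply/forallP/andP => [counts | [/eqP <- /eqP <-] [c j]].
  have mu_cnt j : mu j = cnt (fun i => m i && (y i == j)) :> nat.
    by rewrite -(eqP (counts (true, j))) cnt_class.
  split; apply/eqP/ffunP => j; apply/val_inj; rewrite /= type_onE; last by rewrite mu_cnt.
  rewrite (cnt_splitID m) -mu_cnt.
  by rewrite -(cnt_class false) (eqP (counts (false, j))) subnKC.
rewrite cnt_class !type_onE /=; case: c => //=.
by rewrite [X in (_ == X - _)%N](cnt_splitID m) addKn.
Qed.

Lemma card_type_on_class (R : numFieldType) m l mu :
  (\sum_j l j)%N = n -> (\sum_j mu j)%N = cnt m -> (forall j, mu j <= l j)%N ->
  \sum_(y | (type_of y == l) && (type_on m y == mu)) 1
  = multinom R (cnt m) (fun j => mu j) * multinom R (n - cnt m) (fun j => l j - mu j)%N.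
Proof.
move=> sum_l sum_mu mu_le_l.
under eq_bigl do rewrite -has_counts_type //.
rewrite card_has_counts => [|c]; last first.
  case: c => /=; first by rewrite sum_mu; apply: eq_bigr => i _; rewrite eqb_id.
  rewrite sumnB => [|j _]; last exact: mu_le_l.
  by rewrite sum_l sum_mu -cnt_predC; apply: eq_bigr => i _; rewrite eqbF_neg.
rewrite big_bool /=; congr (_ * _); congr (multinom _ _ _).
  by apply: eq_bigr => i _; rewrite eqb_id.
by rewrite -cnt_predC; apply: eq_bigr => i _; rewrite eqbF_neg.
Qed.

Lemma card_type_class (R : numFieldType) l :
  (\sum_j l j)%N = n -> \sum_(y | type_of y == l) 1 = multinom R n (fun j => l j).
Proof.
move=> sum_l.
transitivity (\sum_(y | (type_of y == l) && (type_on xpredT y == l)) 1 : R).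
  by apply: eq_bigl => y; rewrite andbb.
rewrite card_type_on_class ?sum_l ?cnt_predT // subnn multinom0 ?mulr1 // => j.
exact: subnn.
Qed.

End Types.

Lemma F2_cases (x : 'F_2) : x = 0 \/ x = 1.
Proof. by case: x => [[|[|//]]] x_lt; [left|right]; exact: val_inj. Qed.

Definition supp n (d : 'rV['F_2]_n) : 'I_n -> bool := fun i => d 0 i != 0.

Lemma hwt_supp n (d : 'rV['F_2]_n) : hwt d = cnt (supp d).
Proof. by rewrite /hwt cnt_card. Qed.

Lemma hdist0 n (d : 'rV['F_2]_n) : hdist d 0 = hwt d.
Proof. by apply: eq_card => i; rewrite !inE mxE. Qed.

Section Channel.

Variables (R : realFieldType) (M n : nat) (eps : 'F_2 -> Yout M -> R).
Variable C : {vspace 'rV['F_2]_n}.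
Hypothesis eps_ge0 : forall x y, 0 <= eps x y.
Hypothesis eps_sym : forall y, eps 1 y = eps 0 (rev_ord y).

Implicit Types (c d : 'rV['F_2]_n) (y : {ffun 'I_n -> Yout M}).
Implicit Types (l mu : {ffun Yout M -> 'I_n.+1}).

Definition flip_on c y : {ffun 'I_n -> Yout M} :=
  [ffun i => if c 0 i == 1 then rev_ord (y i) else y i].

Lemma flip_onK c : involutive (flip_on c).
Proof.
by move=> y; apply/ffunP => i; rewrite !ffunE; case: (c 0 i == 1); rewrite ?rev_ordK.
Qed.

Lemma eps_flip (x b : 'F_2) j : eps x (if b == 1 then rev_ord j else j) = eps (x - b) j.
Proof.
case: (F2_cases b) => ->; first by rewrite subr0.
rewrite eqxx; case: (F2_cases x) => ->; last by rewrite subrr eps_sym rev_ordK.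
by rewrite (_ : 0 - 1 = 1) ?eps_sym //; apply: val_inj.
Qed.

Lemma lik_flip c d y : lik eps d (flip_on c y) = lik eps (d - c) y.
Proof. by apply: eq_bigr => i _; rewrite ffunE eps_flip !mxE. Qed.

Lemma Perr_translate c : c \in C -> Perr eps C c = Perr eps C 0.
Proof.
move=> cC; rewrite /Perr (reindex_inj (inv_inj (flip_onK c))) /=.
apply: eq_bigr => y _; rewrite lik_flip subrr; congr (_ * _); congr (if _ then _ else _).
apply/existsP/existsP => [[c' /and3P[c'C c'_neq_c le]]|[d /and3P[dC d_neq0 le]]].
  by exists (c' - c); rewrite memvB //= subr_eq0 c'_neq_c -lik_flip.
exists (d + c); rewrite memvD //= lik_flip // addrK le andbT.
by apply: contra d_neq0 => /eqP dc_eq_c; rewrite -(addrK c d) dc_eq_c subrr.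
Qed.

Definition ml_error y : bool :=
  [exists d, [&& d \in C, d != 0 & lik eps 0 y <= lik eps d y]].

Lemma Perr0E : Perr eps C 0 = \sum_y lik eps 0 y * (ml_error y)%:R.
Proof. by apply: eq_bigr => y _; rewrite /ml_error; case: [exists _, _]. Qed.

Definition llr_nonpos mu : bool := \prod_j eps 0 j ^+ mu j <= \prod_j eps 1 j ^+ mu j.

Lemma lik_ge0 c y : 0 <= lik eps c y.
Proof. by apply: prodr_ge0 => i _; exact: eps_ge0. Qed.

Lemma lik0_type_of y : lik eps 0 y = \prod_j eps 0 j ^+ type_of y j.
Proof. by rewrite -prod_type_on; apply: eq_bigr => i _; rewrite mxE. Qed.

Lemma lik_supp d y :
  lik eps d y = \prod_(i | supp d i) eps 1 (y i) * \prod_(i | ~~ supp d i) eps 0 (y i).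
Proof.
rewrite /lik (bigID (supp d)) /=; congr (_ * _); apply: eq_bigr => i; rewrite /supp.
  by case: (F2_cases (d 0 i)) => ->; rewrite ?eqxx.
by rewrite negbK => /eqP ->.
Qed.

Lemma llr_nonpos_of_lik_le d y :
  lik eps 0 y != 0 -> lik eps 0 y <= lik eps d y -> llr_nonpos (type_on (supp d) y).
Proof.
move=> lik0_neq0 le; rewrite /llr_nonpos -!prod_type_on.
set A := \prod_(i | ~~ supp d i) eps 0 (y i).
have lik0 : lik eps 0 y = \prod_(i | supp d i) eps 0 (y i) * A.
  by rewrite /lik (bigID (supp d)) /=; congr (_ * _); apply: eq_bigr => i _; rewrite mxE.
have A_gt0 : 0 < A.
  rewrite lt_def prodr_ge0 ?andbT => [|i _]; last exact: eps_ge0.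
  by move: lik0_neq0; rewrite lik0 mulf_eq0 negb_or => /andP[].
by rewrite -(ler_pM2r A_gt0) -lik0 /A -lik_supp.
Qed.

Lemma ml_error_union_bound y :
  lik eps 0 y * (ml_error y)%:R
  <= lik eps 0 y * \sum_(d | (d \in C) && (d != 0)) (llr_nonpos (type_on (supp d) y))%:R.
Proof.
have [->|lik0_neq0] := eqVneq (lik eps 0 y) 0; first by rewrite !mul0r.
rewrite ler_wpM2l ?lik_ge0 // /ml_error.
case: existsP => [[d /and3P[dC d_neq0 le]]|_]; last first.
  by rewrite sumr_ge0 // => d _; exact: ler0n.
rewrite (bigD1 d) ?dC ?d_neq0 //= llr_nonpos_of_lik_le // lerDl.
by rewrite sumr_ge0 // => d' _; exact: ler0n.
Qed.

Definition pair_count l w : R :=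
  \sum_(mu : {ffun Yout M -> 'I_n.+1} |
         [&& (\sum_j (mu j : nat) == w)%N, [forall j, (mu j <= l j)%N] & llr_nonpos mu])
     multinom R w (fun j => mu j : nat) * multinom R (n - w) (fun j => l j - mu j)%N.

Lemma pair_count_ge0 l w : 0 <= pair_count l w.
Proof. by apply: sumr_ge0 => mu _; rewrite mulr_ge0 ?multinom_ge0. Qed.

Lemma card_type_class_llr l d :
  (\sum_j l j)%N = n ->
  \sum_(y | type_of y == l) (llr_nonpos (type_on (supp d) y))%:R = pair_count l (hwt d).
Proof.
move=> sum_l.
rewrite (eq_bigr (fun y => if llr_nonpos (type_on (supp d) y) then 1 else 0)) => [|y _];
  last by case: llr_nonpos.
rewrite -big_mkcondr /= (partition_big (type_on (supp d)) (fun mu =>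
    [&& (\sum_j (mu j : nat) == hwt d)%N, [forall j, (mu j <= l j)%N] & llr_nonpos mu]))
  => [|y /andP[/eqP type_y llr_y]]; last first.
  rewrite sum_type_on -hwt_supp eqxx llr_y andbT /=.
  by apply/forallP => j; rewrite -type_y !type_onE cnt_andb_le.
apply: eq_bigr => mu /and3P[/eqP sum_mu /forallP mu_le_l llr_mu].
rewrite hwt_supp in sum_mu *; rewrite -card_type_on_class //.
apply: eq_bigl => y.
by case: (type_on _ y =P mu) => [->|_]; rewrite ?andbF // llr_mu !andbT.
Qed.

Lemma sum_codewords_by_weight_le dmin (F : nat -> R) :
  is_dmin C dmin -> (forall w, 0 <= F w) ->
  \sum_(d | (d \in C) && (d != 0)) F (hwt d)
  <= \sum_(dmin <= w < n.+1) (wdist C w)%:R * F w.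
Proof.
move=> [_ dmin_le] F_ge0.
have F_hwt d : (d \in C) && (d != 0) ->
    F (hwt d) = \sum_(dmin <= w < n.+1) (hwt d == w)%:R * F w.
  case/andP => dC d_neq0.
  rewrite (eq_bigr (fun w => if w == hwt d then F w else 0)) => [|w _]; last first.
    by rewrite eq_sym; case: eqP; rewrite ?mul1r ?mul0r.
  rewrite -big_mkcond big_nat1_eq ifT //.
  by rewrite -hdist0 dmin_le ?mem0v //= ltnS hdist0 hwt_supp cnt_le.
rewrite (eq_bigr _ F_hwt) exchange_big /=; apply: ler_sum => w _.
rewrite -big_distrl /= ler_wpM2r // -natr_sum ler_nat.
rewrite (eq_bigr (fun d => if hwt d == w then 1%N else 0%N)) => [|d _]; last by case: (_ == _).
rewrite -big_mkcondr sum1dep_card /wdist subset_leq_card //.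
by apply/subsetP => d; rewrite !inE => /andP[/andP[-> _] ->].
Qed.

Lemma type_class_error_le dmin l :
  is_dmin C dmin -> (\sum_j l j)%N = n ->
  \sum_(y | type_of y == l) lik eps 0 y * (ml_error y)%:R
  <= (\prod_j eps 0 j ^+ l j) *
     Num.min (\sum_(dmin <= w < n.+1) (wdist C w)%:R * pair_count l w)
             (multinom R n (fun j => l j)).
Proof.
move=> dminC sum_l; set E := \prod_j _.
have E_ge0 : 0 <= E by apply: prodr_ge0 => j _; exact: exprn_ge0.
have lik_class y : type_of y == l -> lik eps 0 y = E.
  by move/eqP => type_y; rewrite /E -type_y; exact: lik0_type_of.
rewrite minr_pMr // le_min; apply/andP; split.
  apply: (@le_trans _ _ (E * \sum_(y | type_of y == l)
      \sum_(d | (d \in C) && (d != 0)) (llr_nonpos (type_on (supp d) y))%:R)).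
    rewrite big_distrr /=; apply: ler_sum => y type_y.
    by rewrite -(lik_class y type_y) ml_error_union_bound.
  rewrite ler_wpM2l // exchange_big /=.
  under eq_bigr do rewrite card_type_class_llr //.
  exact: sum_codewords_by_weight_le (pair_count_ge0 l).
rewrite -card_type_class // big_distrr /=; apply: ler_sum => y type_y.
by rewrite lik_class // ler_wpM2l // lern1 leq_b1.
Qed.

End Channel.

Theorem theorem1 (R : realFieldType) (M n : nat) (eps : 'F_2 -> Yout M -> R)
    (C : {vspace 'rV['F_2]_n}) (dmin : nat) :
  (1 <= M)%N ->
  (forall x y, 0 <= eps x y) ->
  (forall x, \sum_(y : Yout M) eps x y = 1) ->
  (forall y, eps 1 y = eps 0 (rev_ord y)) ->
  is_dmin C dmin ->
  forall c, c \in C -> Perr eps C c <= bound eps C dmin.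
Proof.
move=> _ eps_ge0 _ eps_sym dminC c cC.
rewrite (Perr_translate eps_sym cC) Perr0E.
rewrite (partition_big (@type_of _ n) (fun l => (\sum_j (l j : nat) == n)%N)) => [|y _];
  last by rewrite sum_type_of.
by apply: ler_sum => l /eqP sum_l; exact: type_class_error_le.
Qed.
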